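(* Let $1\le p,q<\infty$, $\theta>0$, and let $E$ be a bounded Lebesgue measurable subset of $\mathbb R$. Then: (a) $\chi_E\in l^{q),\theta}(L^p)$; (b) $\chi_E\in l^{q)',\theta}(L^p)$; (c) there exists a constant $c_E>0$ such that $\int_E|g(x)|\,dx\le c_E\|g\|_{p,q),\theta}$ for every measurable function $g\in l^{q),\theta}(L^p)$.
   Context: Index set $\mathbb Z$, $I_k=[k,k+1)$. The space $l^{q),\theta}(L^p)$ consists of complex-valued measurable $g$ on $\mathbb R$ with $g\chi_{I_k}\in L^p$ for all $k$ and $\|g\|_{p,q),\theta}:=\sup_{\varepsilon>0}\Big(\varepsilon^{\theta}\sum_{k\in\mathbb Z}\big(\int_{I_k}|g|^p\big)^{\frac{q(1+\varepsilon)}{p}}\Big)^{\frac{1}{q(1+\varepsilon)}}<\infty$. The small Lebesgue sequence space $l^{q)',\theta}$ consists of sequences $y=\{y_k\}_{k\in\mathbb Z}$ with $$\|y\|_{l^{q)',\theta}}:=\inf\Big\{\sum_{j\in\mathbb Z}\inf_{\varepsilon>0}\varepsilon^{\frac{-\theta}{q(1+\varepsilon)}}\Big(\sum_{k\in\mathbb Z}y_{k,j}^{(q(1+\varepsilon))'}\Big)^{\frac{1}{(q(1+\varepsilon))'}}\Big\}<\infty,$$ the outer infimum over all decompositions $|y_k|=\sum_{j\in\mathbb Z}y_{k,j}$ with $y_{k,j}\ge0$, and $(q(1+\varepsilon))'$ the conjugate exponent of $q(1+\varepsilon)$. The space $l^{q)',\theta}(L^p)$ consists of complex-valued measurable $f$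 on $\mathbb R$ with $f\chi_{I_k}\in L^p$ for all $k$ and $\|f\|_{p,q)',\theta}:=\big\|\{\|f\chi_{I_k}\|_{L^p}\}_{k\in\mathbb Z}\big\|_{l^{q)',\theta}}<\infty$. *)

From mathcomp Require Import all_boot all_order all_algebra.
From mathcomp Require Import all_classical all_reals all_analysis.
From mathcomp Require Import complex.
Import Order.TTheory GRing.Theory Num.Theory.

Set Implicit Arguments.
Unset Strict Implicit.
Unset Printing Implicit Defensive.

Local Open Scope classical_set_scope.
Local Open Scope ring_scope.

(* The real line equipped with the Lebesgue (= completed, Caratheodory)
   sigma-algebra, and the (completed) Lebesgue measure on it. *)
Notation LebR R := (caratheodory_type (R:=R) (@wlength R idfun)^*%mu).
Notation leb R := (@completed_lebesgue_measure R).

Notation cabs z := (ComplexField.Normc.normc z).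

Definition Iint (R : realType) (k : int) : set R :=
  [set x : R | k%:~R <= x < (k + 1)%:~R].

Definition cmeasurable (R : realType) (g : R -> R[i]) : Prop :=
  measurable_fun [set: LebR R] (fun x : LebR R => complex.Re (g x)) /\
  measurable_fun [set: LebR R] (fun x : LebR R => complex.Im (g x)).

Definition locint (R : realType) (p : R) (g : R -> R[i]) (k : int) : \bar R :=
  (\int[leb R]_(x in (Iint k : set (LebR R))) (powR (cabs (g x)) p)%:E)%E.

Definition norm_grand (R : realType) (p q theta : R) (g : R -> R[i]) : \bar R :=
  ereal_sup [set poweR ((powR eps theta)%:E *
                  \esum_(k in [set: int]) poweR (locint p g k) (q * (1 + eps) / p))%E
                 (1 / (q * (1 + eps)))
            | eps in [set eps : R | 0 < eps]].

Definition in_grand (R : realType) (p q theta : R) (g : R -> R[i]) : Prop :=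
  [/\ cmeasurable g,
      (forall k : int, (locint p g k < +oo)%E) &
      (norm_grand p q theta g < +oo)%E].

Definition conj_exp (R : realType) (r : R) : R := r / (r - 1).

Definition norm_small_seq (R : realType) (q theta : R) (y : int -> R) : \bar R :=
  ereal_inf
    [set \esum_(j in [set: int])
           ereal_inf
             [set ((powR eps (- theta / (q * (1 + eps))))%:E *
                   poweR (\esum_(k in [set: int])
                      (powR (Y k j) (conj_exp (q * (1 + eps))))%:E)
                     (1 / conj_exp (q * (1 + eps))))%E
             | eps in [set eps : R | 0 < eps]]
    | Y in [set Y : int -> int -> R |
              (forall k j, 0 <= Y k j) /\
              (forall k, (\esum_(j in [set: int]) (Y k j)%:E)%E = (`|y k|)%:E)]].

Definition locnorm (R : realType) (p : R) (f : R -> R[i]) (k : int) : R :=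
  fine (poweR (locint p f k) (1 / p)).

Definition in_small (R : realType) (p q theta : R) (f : R -> R[i]) : Prop :=
  [/\ cmeasurable f,
      (forall k : int, (locint p f k < +oo)%E) &
      (norm_small_seq q theta (locnorm p f) < +oo)%E].

Definition cchi (R : realType) (E : set R) : R -> R[i] :=
  fun x => Complex (\1_E x) 0.

From mathcomp Require Import all_boot all_order all_algebra.
From mathcomp Require Import all_classical all_reals all_analysis.
From mathcomp Require Import complex measurable_realfun finmap.
From mathcomp Require Import ring lra.
Import Order.TTheory GRing.Theory Num.Theory.

Set Implicit Arguments.
Unset Strict Implicit.
Unset Printing Implicit Defensive.

Local Open Scope classical_set_scope.
Local Open Scope ring_scope.

(* The local masses of the characteristic function, |E ∩ I_k| ∈ [0, 1], vanish except
   for the finitely many k = ⌊x⌋ with x ∈ E, say N of them.  So for (a) every term of the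
   grand norm is at most (eps^θ N)^(1/(q(1+eps))) ≤ e^θ (N + 1), since ln eps ≤ q(1+eps);
   for (b) the decomposition putting all of |y_k| in the column j = 0 has finite cost.
   For (c), the eps = 1 term of the grand norm of g dominates every (∫_{I_k} |g|^p)^(1/p),
   which dominates ∫_{I_k} |g| by Jensen's inequality on the unit-measure interval I_k;
   summing over the N intervals covering E gives ∫_E |g| ≤ N ||g||. *)

Lemma conjugate_powR1 {R : realType} (x p : R) : 0 <= x -> 1 <= p ->
  x <= x `^ p / p + (1 - p^-1).
Proof.
move=> x0 p1; have [<-|p1'] := eqVneq 1 p.
  by rewrite powRr1 // invr1 mulr1 subrr addr0.
have {p1'}p1 : 1 < p by rewrite lt_neqAle p1' p1.
have p0 : 0 < p by lra.
have q0 : 0 < p / (p - 1) by rewrite divr_gt0 //; lra.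
have pq : p^-1 + (p / (p - 1))^-1 = 1 by rewrite invf_div; field; lra.
have := conjugate_powR x0 ler01 p0 q0 pq.
rewrite mulr1 powR1 div1r invf_div => /le_trans; apply.
by rewrite lerD2l mulrBl divff ?gt_eqF // mul1r.
Qed.

Lemma powR_le1 {R : realType} (a r : R) : 0 <= a <= 1 -> 0 <= r -> a `^ r <= 1.
Proof.
move=> /andP[a0 a1] r0.
by have := ge0_ler_powR r0 a0 ler01 a1; rewrite powR1.
Qed.

Lemma powR_grand_term_le {R : realType} (eps theta q s : R) :
  0 < eps -> 0 <= theta -> 1 <= q -> 0 <= s ->
  (eps `^ theta * s) `^ (1 / (q * (1 + eps))) <= expR theta * (s + 1).
Proof.
move=> eps0 theta0 q1 s0; set r := q * (1 + eps).
have epsr : eps <= r by rewrite /r; nra.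
have r1 : 1 <= r by rewrite /r; nra.
have r0 : 0 < r by lra.
rewrite powRM ?powR_ge0 // -powRrM.
apply: ler_pM; rewrite ?powR_ge0 //.
  rewrite /powR gt_eqF // ler_expR.
  have ln_eps : ln eps <= r by have := @le_ln1Dx R (eps - 1); rewrite subrKC; lra.
  by rewrite -mulrA ler_piMr // mul1r mulrC ler_pdivrMr // mul1r.
apply: le_trans (_ : (s + 1) `^ (1 / r) <= _).
  by apply: ge0_ler_powR; rewrite ?nnegrE ?divr_ge0 //; lra.
by apply: ler1_powR; rewrite ?ler_pdivrMr // ?mul1r; lra.
Qed.

Section integral_le_poweR.
Context d (T : measurableType d) (R : realType) (mu : {measure set T -> \bar R}).
Variables (D : set T) (f : T -> R) (p : R).
Hypotheses (mD : measurable D) (muD1 : mu D = 1%E) (mf : measurable_fun D f).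
Hypotheses (f0 : forall x, D x -> 0 <= f x) (p1 : 1 <= p).

Let p0 : 0 < p. Proof. exact: lt_le_trans ltr01 p1. Qed.

Let integral_affine (c1 c2 : R) : 0 <= c1 -> 0 <= c2 ->
  (\int[mu]_(x in D) (c1 * f x `^ p + c2)%:E =
   c1%:E * \int[mu]_(x in D) (f x `^ p)%:E + c2%:E)%E.
Proof.
move=> c10 c20.
have mfp : measurable_fun D (fun x => f x `^ p).
  exact: (measurableT_comp (measurable_powR p) mf).
under eq_integral do rewrite EFinD EFinM.
rewrite ge0_integralD //; last 2 first.
- by move=> x _; rewrite -EFinM lee_fin mulr_ge0 // powR_ge0.
- by apply/measurable_EFinP/measurable_funM.
rewrite ge0_integralZl //; last 2 first.
- exact/measurable_EFinP.
- by move=> x _; rewrite lee_fin powR_ge0.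
by rewrite integral_cst // muD1 mule1.
Qed.

(* Young's inequality at scale [A = b ^ (1/p) + e] bounds [f] by an affine function of
   [f ^ p] whose integral over [D] is at most [A], because [mu D = 1]. *)
Lemma integral_le_poweR_integral :
  (\int[mu]_(x in D) (f x)%:E <= (\int[mu]_(x in D) (f x `^ p)%:E) `^ p^-1)%E.
Proof.
set a := (\int[mu]_(x in D) (f x `^ p)%:E)%E.
have a0 : (0 <= a)%E by apply: integral_ge0 => x _; rewrite lee_fin powR_ge0.
have [->|ay] := eqVneq a +oo%E; first by rewrite poweRyr ?invr_neq0 ?gt_eqF // leey.
have afin : a \is a fin_num by rewrite ge0_fin_numE // ltey ay.
rewrite -(fineK afin) poweR_EFin; set b := fine a.
have b0 : 0 <= b by rewrite fine_ge0.
apply/lee_addgt0Pr => e e0; rewrite -EFinD; set A := b `^ p^-1 + e.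
have A0 : 0 < A by rewrite /A ltr_wpDl // powR_ge0.
set c := A * A^-1 `^ p / p.
have c0 : 0 <= c by rewrite divr_ge0 ?mulr_ge0 ?powR_ge0 // ltW.
have c2 : 0 <= A * (1 - p^-1) by rewrite mulr_ge0 ?subr_ge0 ?invf_le1 // ltW.
have young x : D x -> f x <= c * f x `^ p + A * (1 - p^-1).
  move=> Dx; have fA0 : 0 <= f x / A by rewrite divr_ge0 ?f0 // ltW.
  have /(ler_wpM2l (ltW A0)) := conjugate_powR1 fA0 p1.
  rewrite mulrCA divff ?gt_eqF // mulr1 => /le_trans; apply.
  rewrite powRM ?invr_ge0 ?(ltW A0) ?f0 // mulrDr lerD2r.
  by rewrite (_ : A * _ = c * f x `^ p) // /c; ring.
apply: (@le_trans _ _ (\int[mu]_(x in D) (c * f x `^ p + A * (1 - p^-1))%:E)%E).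
  apply: ge0_le_integral => //; first exact/measurable_EFinP.
  apply/measurable_EFinP/measurable_funD => //.
  exact/measurable_funM/(measurableT_comp (measurable_powR p) mf).
rewrite integral_affine // -/a -(fineK afin) -EFinM -EFinD lee_fin -/b.
have bA : b <= A `^ p.
  have {1}-> : b = (b `^ p^-1) `^ p by rewrite -powRrM mulVf ?gt_eqF // powRr1.
  apply: ge0_ler_powR; rewrite ?nnegrE ?powR_ge0 ?(ltW A0) ?(ltW p0) //.
  by rewrite /A lerDl ltW.
have cA : c * A `^ p = A / p.
  have AinvA : A^-1 `^ p * A `^ p = 1.
    by rewrite -powRM ?invr_ge0 ?ltW // mulVf ?gt_eqF // powR1.
  by rewrite /c mulrAC -(mulrA A) AinvA mulr1.
apply: le_trans (_ : c * A `^ p + A * (1 - p^-1) <= A).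
  by rewrite lerD2r ler_wpM2l.
by rewrite cA mulrBr mulr1 subrKC.
Qed.

End integral_le_poweR.

Section esum_le_card.
Context {R : realType} {T : choiceType}.

Lemma esum_le_card (A : set T) (f : T -> \bar R) (c : R) : finite_set A ->
  (forall t, 0 <= f t)%E -> (forall t, A t -> f t <= c%:E)%E ->
  (forall t, ~ A t -> f t = 0%E) ->
  (\esum_(t in [set: T]) f t <= (#|` fset_set A|%:R * c)%:E)%E.
Proof.
move=> finA f0 fc f_out.
have -> : (\esum_(t in [set: T]) f t = \esum_(t in A) f t)%E.
  rewrite [RHS]esum_mkcond; apply: eq_esum => t _.
  by case: ifPn => // /negP; rewrite in_setE => /f_out.
rewrite esum_fset // fsbig_finite //= card_fset_sum1 natr_sum mulr_suml -sumEFin.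
by rewrite !big_seq; apply: lee_sum => t; rewrite in_fset_set // in_setE mul1r => /fc.
Qed.

End esum_le_card.

Section normc.
Context {R : realType}.

Lemma normc_ge0 (z : R[i]) : 0 <= cabs z.
Proof. by case: z => a b; exact: sqrtr_ge0. Qed.

Lemma measurable_normc (g : R -> R[i]) : cmeasurable g ->
  measurable_fun [set: LebR R] (fun x : LebR R => cabs (g x)).
Proof.
move=> [mRe mIm].
have -> : (fun x : LebR R => cabs (g x)) =
    (fun x => Num.sqrt (complex.Re (g x) ^+ 2 + complex.Im (g x) ^+ 2)).
  by apply/funext => x; case: (g x).
apply: measurableT_comp; first exact: continuous_measurable_fun (@sqrt_continuous R).
by apply: measurable_funD; apply: measurable_funX.
Qed.

Lemma normc_cchi (E : set R) x : cabs (cchi E x) = \1_E x.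
Proof. by rewrite /cchi /= expr0n /= addr0 sqrtr_sqr ger0_norm. Qed.

Lemma cmeasurable_cchi (E : set R) : measurable (E : set (LebR R)) ->
  cmeasurable (cchi E).
Proof. by move=> mE; split; [exact: measurable_indic | exact: measurable_cst]. Qed.

End normc.

Section unit_intervals.
Context {R : realType}.

Lemma IintE (k : int) : Iint k = [set` `[(k%:~R : R), (k + 1)%:~R[%R].
Proof. by apply/seteqP; split => x; rewrite /Iint /= in_itv. Qed.

Lemma measurable_Iint (k : int) : measurable (Iint k : set (LebR R)).
Proof. by rewrite IintE; exact: sub_caratheodory. Qed.

Lemma leb_Iint (k : int) : leb R (Iint k) = 1%E.
Proof.
rewrite IintE; change (lebesgue_measure [set` `[(k%:~R : R), (k + 1)%:~R[%R] = 1%E).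
by rewrite lebesgue_measure_itv /= lte_fin ltr_int ltzD1 lexx -EFinB intrD addrC addKr.
Qed.

Lemma in_Iint (k : int) (x : R) : Iint k x <-> Num.floor x = k.
Proof. by rewrite /Iint /=; split => [/floor_def//|<-]; exact: floor_itv. Qed.

Lemma trivIset_Iint (A : set int) : trivIset A (@Iint R).
Proof. by move=> j k _ _ [x [/in_Iint <- /in_Iint]]. Qed.

Lemma finite_floor_image (E : set R) : (exists M, forall x, E x -> `|x| <= M) ->
  finite_set (Num.floor @` E).
Proof.
move=> [M EM]; set a := Num.floor (- M).
pose N := `|Num.floor M - a|%N.+1.
apply: (sub_finite_set _ (finite_image (fun n : nat => a + n%:Z) (finite_II N))).
move=> _ [x Ex <-]; have := EM x Ex; rewrite ler_norml => /andP[Mx xM].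
have ax : a <= Num.floor x by exact: le_floor.
have xM' : Num.floor x <= Num.floor M by exact: le_floor.
exists `|Num.floor x - a|%N; last first.
  by rewrite gez0_abs ?subr_ge0 // addrCA subrr addr0.
rewrite /= /N ltnS -lez_nat !gez0_abs ?subr_ge0 ?(le_trans ax) //.
by rewrite lerD2r.
Qed.

End unit_intervals.

Lemma locint_ge0 {R : realType} (p : R) (g : R -> R[i]) (k : int) : (0 <= locint p g k)%E.
Proof. by apply: integral_ge0 => x _; rewrite lee_fin powR_ge0. Qed.

Section characteristic_function.
Context {R : realType} (p : R) (E : set R).
Hypotheses (p0 : 0 < p) (mE : measurable (E : set (LebR R))).

Lemma locint_cchi (k : int) : locint p (cchi E) k = leb R (E `&` Iint k).
Proof.
rewrite /locint -integral_indic //; last exact: measurable_Iint.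
apply: eq_integral => x _; rewrite normc_cchi /indic.
by case: (x \in E); rewrite ?powR1 ?powR0 ?gt_eqF.
Qed.

Lemma locint_cchi_le1 (k : int) : (locint p (cchi E) k <= 1)%E.
Proof.
rewrite locint_cchi -(leb_Iint k); apply: le_measure; rewrite ?in_setE.
- exact: measurableI mE (measurable_Iint k).
- exact: measurable_Iint.
- exact: subIsetr.
Qed.

Lemma locint_cchi_eq0 (k : int) : ~ (Num.floor @` E) k -> locint p (cchi E) k = 0%E.
Proof.
move=> Ek; rewrite locint_cchi (_ : _ `&` _ = set0) ?measure0 //.
by apply/seteqP; split => // x [Ex /in_Iint xk]; apply: Ek; exists x.
Qed.

Lemma locnorm_cchi_le1 (k : int) : `|locnorm p (cchi E) k| <= 1.
Proof.
have a0 := locint_ge0 p (cchi E) k; have a1 := locint_cchi_le1 k.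
have afin : locint p (cchi E) k \is a fin_num.
  by rewrite ge0_fin_numE // (le_lt_trans a1) ?ltry.
rewrite /locnorm -(fineK afin) poweR_EFin /= ger0_norm ?powR_ge0 // powR_le1 //.
- by rewrite -!lee_fin fineK ?a0.
- by rewrite divr_ge0 // ltW.
Qed.

Lemma locnorm_cchi_eq0 (k : int) : ~ (Num.floor @` E) k -> locnorm p (cchi E) k = 0.
Proof.
by move=> Ek; rewrite /locnorm locint_cchi_eq0 // poweR0r // div1r invr_neq0 // gt_eqF.
Qed.

End characteristic_function.

Section grand_norm.
Context {R : realType} (p q theta : R).

Lemma norm_grand_lt_pinfty (g : R -> R[i]) (A : set int) :
  0 < p -> 1 <= q -> 0 <= theta -> finite_set A ->
  (forall k, locint p g k <= 1)%E -> (forall k, ~ A k -> locint p g k = 0%E) ->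
  (norm_grand p q theta g < +oo)%E.
Proof.
move=> p0 q1 theta0 finA g1 g_out; set C : R := #|` fset_set A|%:R.
apply: le_lt_trans (ltry (expR theta * (C + 1))).
apply: ge_ereal_sup => _ [eps /= eps0 <-].
have r0 : 0 < q * (1 + eps) / p by rewrite !divr_gt0 ?mulr_gt0 //; lra.
set S := (\esum_(k in _) _)%E.
have SC : (S <= (C * 1)%:E)%E.
  apply: esum_le_card => // [k|k Ak|k /g_out ->]; first exact: poweR_ge0.
  - rewrite -(poweR1r (q * (1 + eps) / p)); apply: gt0_ler_poweR => //; first exact: ltW.
    + by rewrite in_itv /= locint_ge0 leey.
    + by rewrite in_itv /= lee01 leey.
  - by rewrite poweR0r // gt_eqF.
have S0 : (0 <= S)%E by apply: esum_ge0 => k _; exact: poweR_ge0.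
have Sfin : S \is a fin_num by rewrite ge0_fin_numE // (le_lt_trans SC) ?ltry.
rewrite -(fineK Sfin) -EFinM poweR_EFin lee_fin.
apply: le_trans (powR_grand_term_le eps0 theta0 q1 (fine_ge0 S0)) _.
rewrite ler_wpM2l ?expR_ge0 // lerD2r -lee_fin fineK //.
by rewrite mulr1 in SC.
Qed.


Lemma le_norm_grand (g : R -> R[i]) (eps : R) : 0 < eps ->
  (((eps `^ theta)%:E * \esum_(k in [set: int]) (locint p g k) `^ (q * (1 + eps) / p))
     `^ (1 / (q * (1 + eps))) <= norm_grand p q theta g)%E.
Proof. by move=> eps0; apply: ereal_sup_ubound; exists eps. Qed.

Lemma poweR_locint_le_norm_grand (g : R -> R[i]) (k : int) : 0 < p -> 0 < q ->
  ((locint p g k) `^ p^-1 <= norm_grand p q theta g)%E.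
Proof.
move=> p0 q0; set r := q * (1 + 1).
have r0 : 0 < r by rewrite /r mulr_gt0 // addr_gt0.
apply: le_trans (le_norm_grand g ltr01); rewrite powR1 mul1e -/r.
have -> : (locint p g k `^ p^-1 = (locint p g k `^ (r / p)) `^ (1 / r))%E.
  by rewrite -poweRrM mul1r mulrC mulrA mulVf ?gt_eqF // mul1r.
apply: gt0_ler_poweR; first by rewrite divr_ge0 // ltW.
- by rewrite in_itv /= poweR_ge0 leey.
- by rewrite in_itv /= leey andbT esum_ge0 // => j _; exact: poweR_ge0.
apply: esum_ge; exists [set k]; first by split; [exact: finite_set1 |].
by rewrite fsbig_set1.
Qed.

Lemma norm_grand_ge0 (g : R -> R[i]) : 0 < p -> 0 < q -> (0 <= norm_grand p q theta g)%E.
Proof.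
by move=> p0 q0; apply: le_trans (poweR_locint_le_norm_grand g 0 p0 q0); exact: poweR_ge0.
Qed.

Lemma integral_Iint_le_norm_grand (g : R -> R[i]) (k : int) :
  1 <= p -> 0 < q -> cmeasurable g ->
  (\int[leb R]_(x in (Iint k : set (LebR R))) (cabs (g x))%:E <= norm_grand p q theta g)%E.
Proof.
move=> p1 q0 mg; apply: le_trans (poweR_locint_le_norm_grand g k _ q0); last by lra.
apply: (integral_le_poweR_integral (measurable_Iint k) (leb_Iint k)) => //.
- exact: measurable_funTS (measurable_normc mg).
- by move=> x _; exact: normc_ge0.
Qed.

Lemma integral_le_card_norm_grand (g : R -> R[i]) (E : set R) (A : set int) :
  1 <= p -> 0 < q -> cmeasurable g -> measurable (E : set (LebR R)) -> finite_set A ->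
  E `<=` \bigcup_(k in A) Iint k ->
  (\int[leb R]_(x in (E : set (LebR R))) (cabs (g x))%:E <=
    (#|` fset_set A|%:R)%:E * norm_grand p q theta g)%E.
Proof.
move=> p1 q0 mg mE finA EA.
have mU : measurable (\big[setU/set0]_(k <- fset_set A) Iint k : set (LebR R)).
  by apply: bigsetU_measurable => k _; exact: measurable_Iint.
apply: le_trans (ge0_subset_integral _ mE mU _ _ _) _.
- exact/measurable_EFinP/measurable_funTS/measurable_normc.
- by move=> x _; rewrite lee_fin normc_ge0.
- by rewrite bigsetU_fset_set.
rewrite ge0_integral_bigsetU //; last 4 first.
- exact: measurable_Iint.
- exact: trivIset_Iint.
- exact/measurable_EFinP/measurable_funTS/measurable_normc.
- by move=> x _; rewrite lee_fin normc_ge0.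
rewrite mule_natl -[X in (_ <= X)%E]iter_addr_0 -count_predT -big_const_seq.
by apply: lee_sum => k _; exact: integral_Iint_le_norm_grand.
Qed.

End grand_norm.

Lemma norm_small_seq_lt_pinfty {R : realType} (q theta : R) (y : int -> R) (A : set int) :
  1 <= q -> finite_set A -> (forall k, `|y k| <= 1) -> (forall k, ~ A k -> y k = 0) ->
  (norm_small_seq q theta y < +oo)%E.
Proof.
move=> q1 finA y1 y_out; set r := conj_exp (q * (1 + 1)).
have r0 : 0 < r by rewrite /r /conj_exp divr_gt0; nra.
pose Y (k j : int) := if j == 0 then `|y k| else 0.
pose term (eps : R) (j : int) : \bar R := ((eps `^ (- theta / (q * (1 + eps))))%:E *
  poweR (\esum_(k in [set: int]) ((Y k j) `^ (conj_exp (q * (1 + eps))))%:E)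
    (1 / conj_exp (q * (1 + eps))))%E.
pose C : R := #|` fset_set A|%:R.
have inf_term_ge0 (j : int) :
    (0 <= ereal_inf [set term eps j | eps in [set eps : R | (0 < eps)%R]])%E.
  by apply: le_ereal_inf_tmp => _ [eps _ <-]; rewrite mule_ge0 ?lee_fin ?powR_ge0 ?poweR_ge0.
have inf_term_le (j : int) :
    (ereal_inf [set term eps j | eps in [set eps : R | (0 < eps)%R]] <= term 1%R j)%E.
  by apply: ereal_inf_lbound; exists 1 => //=; exact: ltr01.
apply: (@le_lt_trans _ _ (\esum_(j in [set: int])
    ereal_inf [set term eps j | eps in [set eps : R | (0 < eps)%R]])%E).
  apply: ereal_inf_lbound; exists Y => //; split => [k j|k].
    by rewrite /Y; case: ifP.
  rewrite (esumID [set 0]); last by move=> j _; rewrite /Y; case: ifP.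
  rewrite setTI esum_set1 /Y ?eqxx // esum1 ?adde0 // => j [_ /eqP/negPf ->] //.
apply: le_lt_trans (@esum_le_card _ _ [set 0] _ (C `^ r^-1) (finite_set1 0) _ _ _) (ltry _).
- exact: inf_term_ge0.
- move=> j /= ->; apply: le_trans (inf_term_le 0) _; rewrite /term powR1 mul1e -/r.
  have sumC : (\esum_(k in [set: int]) (Y k 0 `^ r)%:E <= C%:E)%E.
    rewrite -[C]mulr1; apply: esum_le_card => // [k|k _|k /y_out]; rewrite /Y eqxx.
    + by rewrite lee_fin powR_ge0.
    + by rewrite lee_fin powR_le1 ?normr_ge0 ?y1 ?ltW.
    + by move=> ->; rewrite normr0 powR0 ?gt_eqF.
  rewrite -poweR_EFin div1r; apply: gt0_ler_poweR => //.
  + by rewrite invr_ge0 ltW.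
  + by rewrite in_itv /= leey andbT esum_ge0 // => k _; rewrite lee_fin powR_ge0.
  + by rewrite in_itv /= leey andbT lee_fin ler0n.
- move=> j /eqP j0; apply/eqP; rewrite eq_le inf_term_ge0 andbT.
  apply: le_trans (inf_term_le j) _; rewrite /term /Y (negPf j0).
  rewrite esum1 ?poweR0r ?mule0 // ?div1r ?invr_neq0 ?gt_eqF //.
  by move=> k _; rewrite powR0 // gt_eqF.
Qed.

Theorem theorem3p10 (R : realType) (p q theta : R) (E : set R) :
  1 <= p -> 1 <= q -> 0 < theta ->
  measurable (E : set (LebR R)) ->
  (exists M : R, forall x, E x -> `|x| <= M) ->
  [/\ in_grand p q theta (cchi E),
      in_small p q theta (cchi E) &
      exists cE : R, 0 < cE /\
        forall g : R -> R[i], in_grand p q theta g ->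
          (\int[leb R]_(x in (E : set (LebR R))) (cabs (g x))%:E
             <= cE%:E * norm_grand p q theta g)%E].
Proof.
move=> p1 q1 theta0 mE Ebdd.
have p0 : 0 < p by lra.
have q0 : 0 < q by lra.
set A := Num.floor @` E.
have finA : finite_set A := finite_floor_image Ebdd.
have EA : E `<=` \bigcup_(k in A) Iint k.
  by move=> x Ex; exists (Num.floor x); [exists x | apply/in_Iint].
have locint_fin k : (locint p (cchi E) k < +oo)%E.
  by rewrite (le_lt_trans (locint_cchi_le1 p0 mE k)) // ltey.
split.
- split; [exact: cmeasurable_cchi | exact: locint_fin |].
  apply: (norm_grand_lt_pinfty p0 q1 (ltW theta0) finA); first exact: locint_cchi_le1.
  exact: locint_cchi_eq0.
- split; [exact: cmeasurable_cchi | exact: locint_fin |].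
  apply: (norm_small_seq_lt_pinfty _ q1 finA); first exact: locnorm_cchi_le1.
  exact: locnorm_cchi_eq0.
(* [+ 1] keeps the constant positive when [E] is empty. *)
exists (#|` fset_set A|%:R + 1); split; first by rewrite ltr_wpDl.
move=> g [mg _ _].
apply: le_trans (integral_le_card_norm_grand theta p1 q0 mg mE finA EA) _.
by rewrite lee_wpmul2r ?norm_grand_ge0 // lee_fin lerDl.
Qed.
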